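(* Every $w^*$-approximately Connes amenable dual Banach algebra is $w^*$-approximately weakly Connes amenable.
   Context: A dual Banach algebra is a Banach algebra $\mathfrak{A}$ which is the dual of a Banach space $\mathfrak{A}_*$ and whose multiplication is separately $w^*$-continuous. A derivation $D:\mathfrak{A}\to F$ is a continuous linear map with $D(ab)=D(a)\cdot b+a\cdot D(b)$; $\mathrm{ad}_x(a)=a\cdot x-x\cdot a$. A derivation $D:\mathfrak{A}\to E^*$ (with $E$ a Banach bimodule) is $w^*$-approximately inner if there is a net $(f_\alpha)\subseteq E^*$ with $D(a)=w^*\text{-}\lim_\alpha \mathrm{ad}_{f_\alpha}(a)$ for all $a$. A dual Banach bimodule $E=(E_* )^*$ ($E_*$ a closed submodule of $E^*$) is normal if the module actions are $w^*$-$w^*$ continuous. $\mathfrak{A}$ is $w^*$-approximately Connes amenable if for every normal dual Banach $\mathfrak{A}$-bimodule $E$, every $w^*$-$w^*$ continuous derivation $\mathfrak{A}\to E$ is $w^*$-approximately inner. For a Banach bimodule $E$, $\sigma wc(E)$ is the set of $x\in E$ such that $a\mapsto a\cdot x$, $a\mapsto x\cdot a$ are continuous from $(\mathfrak{A},w^* )$ to $(E,\sigma(E,E^* ))$; $j_{\mathfrak{A}}:\mathfrak{A}^*\to\sigma wc(\mathfrak{A})^*$ is the adjoint of the inclusion $\sigma wc(\mathfrak{A})\hookrightarrow\mathfrak{A}$. $\mathfrak{A}$ is $w^*$-approximately weakly Connes amenable if for every derivation $D:\mathfrak{A}\to\mathfrak{A}^*$ such that $j_{\mathfrak{A}}\circ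 D:\mathfrak{A}\to\sigma wc(\mathfrak{A})^*$ is $w^*$-$w^*$ continuous, the derivation $j_{\mathfrak{A}}\circ D$ is $w^*$-approximately inner (with the net taken in $\sigma wc(\mathfrak{A})^*$). *)

From HB Require Import structures.
From mathcomp Require Import all_boot all_order all_algebra.
From mathcomp Require Import complex.
From mathcomp Require Import classical_sets reals.
Set Implicit Arguments.
Unset Strict Implicit.
Unset Printing Implicit Defensive.
Import Order.TTheory GRing.Theory Num.Theory.
Local Open Scope ring_scope.
Local Open Scope classical_set_scope.

Section DualBanach.
Variable R : realType.
Local Notation C := (R[i]).

Definition absc (z : C) : R := Num.sqrt (complex.Re z ^+ 2 + complex.Im z ^+ 2).

Definition is_norm (E : lmodType C) (nE : E -> R) : Prop :=
  [/\ forall x, 0 <= nE x,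
      forall x, nE x = 0 -> x = 0,
      forall (c : C) x, nE (c *: x) = absc c * nE x
    & forall x y, nE (x + y) <= nE x + nE y].

Definition complete_norm (E : lmodType C) (nE : E -> R) : Prop :=
  forall u : nat -> E,
    (forall eps : R, 0 < eps -> exists N, forall m n,
        (N <= m)%N -> (N <= n)%N -> nE (u m - u n) < eps) ->
    exists l : E, forall eps : R, 0 < eps -> exists N, forall n,
        (N <= n)%N -> nE (u n - l) < eps.

Definition banach (E : lmodType C) (nE : E -> R) : Prop :=
  is_norm nE /\ complete_norm nE.

Definition opnorm_le (E : lmodType C) (nE : E -> R) (f : E -> C) (M : R) :=
  forall x, absc (f x) <= M * nE x.

Definition dual_elt (E : lmodType C) (nE : E -> R) (f : E -> C) : Prop :=
  (forall (c : C) x y, f (c *: x + y) = c * f x + f y) /\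
  exists M : R, opnorm_le nE f M.

(* E = (P)^* : P is a norm-closed linear subspace of E^* and the canonical
   map E -> P^*, x |-> (f |-> f x), is an isometric isomorphism onto P^*.
   (A predual E_* given abstractly is identified with its canonical image
   in E^*.) *)
Definition predual (E : lmodType C) (nE : E -> R) (P : set (E -> C)) : Prop :=
  (forall f, P f -> dual_elt nE f) /\
  [/\ P (fun _ => 0),
      (forall (c : C) f g, P f -> P g -> P (fun x => c * f x + g x)),
      (forall f, dual_elt nE f ->
         (forall eps : R, 0 < eps -> exists g, P g /\
              opnorm_le nE (fun x => f x - g x) eps) -> P f),
      (* the canonical map E -> P^* is isometric *)
      (forall x (eps : R), 0 < eps ->
         exists f, [/\ P f, opnorm_le nE f 1 & nE x - eps < absc (f x)])
    & (* ... and onto P^* *)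
      (forall L : (E -> C) -> C,
         (forall (c : C) f g, P f -> P g ->
             L (fun x => c * f x + g x) = c * L f + L g) ->
         (exists M : R, forall f (N : R), P f -> 0 <= N -> opnorm_le nE f N ->
             absc (L f) <= M * N) ->
         exists x : E, forall f, P f -> L f = f x)].

(* T : A -> B is continuous from (A, sigma(A, FA)) to (B, sigma(B, FB)),
   where sigma(X, F) is the weak topology induced by the family F of
   functionals (unfolded via its defining subbasic neighbourhoods). *)
Definition wcont (A B : Type) (FA : set (A -> C)) (FB : set (B -> C))
  (T : A -> B) : Prop :=
  forall (a : A) (g : B -> C) (eps : R), FB g -> 0 < eps ->
    exists (n : nat) (fs : 'I_n -> A -> C) (delta : R),
      [/\ 0 < delta, (forall i, FA (fs i)) &
          forall b, (forall i, absc (fs i b - fs i a) < delta) ->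
             absc (g (T b) - g (T a)) < eps].

Definition directed (I : Type) (le : I -> I -> Prop) : Prop :=
  [/\ inhabited I, (forall i, le i i),
      (forall i j k, le i j -> le j k -> le i k)
    & (forall i j, exists k, le i k /\ le j k)].

Definition net_wlim (X : Type) (F : set (X -> C)) (I : Type)
  (le : I -> I -> Prop) (h : I -> X) (l : X) : Prop :=
  forall (g : X -> C) (eps : R), F g -> 0 < eps ->
    exists i0, forall i, le i0 i -> absc (g (h i) - g l) < eps.

Definition banach_algebra (A : lmodType C) (nA : A -> R) (mul : A -> A -> A)
  : Prop :=
  [/\ banach nA,
      (forall a b c, mul a (mul b c) = mul (mul a b) c),
      (forall (k : C) a b d, mul (k *: a + b) d = k *: mul a d + mul b d),
      (forall (k : C) a b d, mul d (k *: a + b) = k *: mul d a + mul d b)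
    & (forall a b, nA (mul a b) <= nA a * nA b)].

(* A = (A_* )^* with separately weak-star continuous multiplication;
   PA is (the canonical image in A^* of) the predual A_*. *)
Definition dual_banach_algebra (A : lmodType C) (nA : A -> R)
  (mul : A -> A -> A) (PA : set (A -> C)) : Prop :=
  [/\ banach_algebra nA mul, predual nA PA,
      (forall a, wcont PA PA (mul a))
    & (forall a, wcont PA PA (fun b => mul b a))].

Definition banach_bimodule (A : lmodType C) (nA : A -> R) (mul : A -> A -> A)
  (E : lmodType C) (nE : E -> R) (la : A -> E -> E) (ra : E -> A -> E)
  : Prop :=
  [/\ banach nE,
      (forall (k : C) a b x, la (k *: a + b) x = k *: la a x + la b x),
      (forall (k : C) a x y, la a (k *: x + y) = k *: la a x + la a y),
      (forall (k : C) a b x, ra x (k *: a + b) = k *: ra x a + ra x b)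
    & (forall (k : C) a x y, ra (k *: x + y) a = k *: ra x a + ra y a)] /\
  [/\ (forall a b x, la (mul a b) x = la a (la b x)),
      (forall a b x, ra x (mul a b) = ra (ra x a) b),
      (forall a b x, ra (la a x) b = la a (ra x b))
    & (exists M : R, forall a x,
          nE (la a x) <= M * nA a * nE x /\ nE (ra x a) <= M * nA a * nE x)].

(* normal dual Banach A-bimodule E = (PE)^*, PE a closed submodule of E^*
   (dual actions: (a.f)(x) = f(x.a), (f.a)(x) = f(a.x)) *)
Definition normal_dual_bimodule (A : lmodType C) (nA : A -> R)
  (mul : A -> A -> A) (PA : set (A -> C))
  (E : lmodType C) (nE : E -> R) (la : A -> E -> E) (ra : E -> A -> E)
  (PE : set (E -> C)) : Prop :=
  [/\ banach_bimodule nA mul nE la ra,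
      predual nE PE,
      (forall f a, PE f -> PE (fun x => f (ra x a)) /\ PE (fun x => f (la a x)))
    & (forall x, wcont PA PE (fun a => la a x) /\ wcont PA PE (fun a => ra x a))].

Definition derivation (A : lmodType C) (nA : A -> R) (mul : A -> A -> A)
  (E : lmodType C) (nE : E -> R) (la : A -> E -> E) (ra : E -> A -> E)
  (D : A -> E) : Prop :=
  [/\ (forall (k : C) a b, D (k *: a + b) = k *: D a + D b),
      (exists M : R, forall a, nE (D a) <= M * nA a)
    & (forall a b, D (mul a b) = ra (D a) b + la a (D b))].

Definition wapprox_inner (A : lmodType C) (E : lmodType C)
  (la : A -> E -> E) (ra : E -> A -> E) (PE : set (E -> C)) (D : A -> E)
  : Prop :=
  exists (I : Type) (le : I -> I -> Prop) (f : I -> E),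
    directed le /\
    forall a, net_wlim PE le (fun i => la a (f i) - ra (f i) a) (D a).

Definition wapprox_connes_amenable (A : lmodType C) (nA : A -> R)
  (mul : A -> A -> A) (PA : set (A -> C)) : Prop :=
  forall (E : lmodType C) (nE : E -> R) (la : A -> E -> E) (ra : E -> A -> E)
         (PE : set (E -> C)),
    normal_dual_bimodule nA mul PA nE la ra PE ->
    forall D : A -> E, derivation nA mul nE la ra D -> wcont PA PE D ->
      wapprox_inner la ra PE D.

Definition sigma_wc (A : lmodType C) (nA : A -> R) (mul : A -> A -> A)
  (PA : set (A -> C)) (x : A) : Prop :=
  wcont PA (dual_elt nA) (fun a => mul a x) /\
  wcont PA (dual_elt nA) (fun a => mul x a).

(* weak-star topology of sigma wc(A)^*, elements of which are represented by
   functions A -> C (only their restriction to sigma wc(A) matters):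
   it is induced by the evaluations at points of sigma wc(A). *)
Definition swc_eval (A : lmodType C) (nA : A -> R) (mul : A -> A -> A)
  (PA : set (A -> C)) : set ((A -> C) -> C) :=
  [set g | exists x, sigma_wc nA mul PA x /\ g = (fun F => F x)].

Definition swc_dual_elt (A : lmodType C) (nA : A -> R) (mul : A -> A -> A)
  (PA : set (A -> C)) (F : A -> C) : Prop :=
  (forall (c : C) x y, sigma_wc nA mul PA x -> sigma_wc nA mul PA y ->
      F (c *: x + y) = c * F x + F y) /\
  exists M : R, forall x, sigma_wc nA mul PA x -> absc (F x) <= M * nA x.

(* continuous derivation D : A -> A^*, with the dual module actions
   (a.f)(x) = f(x a), (f.a)(x) = f(a x) *)
Definition derivation_to_dual (A : lmodType C) (nA : A -> R)
  (mul : A -> A -> A) (D : A -> A -> C) : Prop :=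
  [/\ (forall a, dual_elt nA (D a)),
      (forall (k : C) a b x, D (k *: a + b) x = k * D a x + D b x),
      (exists M : R, forall a, opnorm_le nA (D a) (M * nA a))
    & (forall a b x, D (mul a b) x = D a (mul b x) + D b (mul x a))].

(* j_A o D : A -> sigma wc(A)^* is w*-approximately inner, with the net in
   sigma wc(A)^*; ad_F(a)(x) = (a.F - F.a)(x) = F(x a) - F(a x). *)
Definition wapprox_weakly_connes_amenable (A : lmodType C) (nA : A -> R)
  (mul : A -> A -> A) (PA : set (A -> C)) : Prop :=
  forall D : A -> A -> C,
    derivation_to_dual nA mul D ->
    wcont PA (swc_eval nA mul PA) D ->
    exists (I : Type) (le : I -> I -> Prop) (F : I -> A -> C),
      [/\ directed le,
          (forall i, swc_dual_elt nA mul PA (F i))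
        & forall a, net_wlim (swc_eval nA mul PA) le
              (fun i => fun x => F i (mul x a) - F i (mul a x)) (D a)].

End DualBanach.

From HB Require Import structures.
From mathcomp Require Import all_boot all_order all_algebra.
From mathcomp Require Import complex.
From mathcomp Require Import boolp classical_sets reals.
From mathcomp Require Import ring lra.
Set Implicit Arguments.
Unset Strict Implicit.
Unset Printing Implicit Defensive.
Import Order.TTheory GRing.Theory Num.Theory ComplexField.
Local Open Scope complex_scope.
Local Open Scope ring_scope.
Local Open Scope classical_set_scope.

(* Write S for sigma_wc(A).  A linear functional on A that is continuous for
   sigma(A, A_* ) lies in A_* (it vanishes on the common kernel of finitely many
   elements of A_* ); with this, S is a norm-closed subspace of A stable under left
   and right multiplication.  Hence its dual S^*, with (a.F)(x) = F(x a) and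
   (F.a)(x) = F(a x), is a dual Banach A-bimodule with predual S.  It is normal:
   each F in S^* extends to some Psi in A^* (Hahn-Banach), and for y in S the maps
   a |-> Psi (y a), a |-> Psi (a y) are w*-continuous by the very definition of S.
   Given D : A -> A^* with j o D w*-continuous, j o D is a w*-continuous derivation
   into this normal module, so w*-approximate Connes amenability makes it
   w*-approximately inner, with the approximating net in S^*. *)

Ltac complex_ext := apply/eqP; rewrite eq_complex /=; apply/andP; split; apply/eqP.

Section ComplexModulus.
Variable R : realType.
Local Notation C := (R[i]).

Lemma normcE (z : C) : `|z| = (absc z)%:C.
Proof. by rewrite normc_def. Qed.

Lemma absc_ge0 (z : C) : 0 <= absc z.
Proof. exact: sqrtr_ge0. Qed.

Lemma abscM (z w : C) : absc (z * w) = absc z * absc w.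
Proof. by apply: (@complexI R); rewrite rmorphM /= -!normcE normrM. Qed.

Lemma ler_abscD (z w : C) : absc (z + w) <= absc z + absc w.
Proof. by rewrite -lecR rmorphD /= -!normcE ler_normD. Qed.

Lemma abscN (z : C) : absc (- z) = absc z.
Proof. by apply: (@complexI R); rewrite -!normcE normrN. Qed.

Lemma absc_distC (z w : C) : absc (z - w) = absc (w - z).
Proof. by rewrite -abscN opprB. Qed.

Lemma absc0 : absc (0 : C) = 0.
Proof. by apply: (@complexI R); rewrite -!normcE normr0. Qed.

Lemma absc1 : absc (1 : C) = 1.
Proof. by apply: (@complexI R); rewrite -normcE normr1 rmorph1. Qed.

Lemma absc_eq0 (z : C) : absc z = 0 -> z = 0.
Proof. by move=> h; apply/eqP; rewrite -normr_eq0 normcE h. Qed.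

Lemma absc_gt0 (z : C) : z != 0 -> 0 < absc z.
Proof. by move=> z0; rewrite lt_def absc_ge0 andbT; apply: contra z0 => /eqP/absc_eq0->. Qed.

Lemma absc_real (r : R) : absc r%:C = `|r|.
Proof. by rewrite /absc /= expr0n /= addr0 sqrtr_sqr. Qed.

Lemma ler_Re_absc (z : C) : `|complex.Re z| <= absc z.
Proof. by rewrite /absc -(sqrtr_sqr (complex.Re z)) ler_wsqrtr // lerDl sqr_ge0. Qed.

Lemma ler_Im_absc (z : C) : `|complex.Im z| <= absc z.
Proof. by rewrite /absc -(sqrtr_sqr (complex.Im z)) ler_wsqrtr // lerDr sqr_ge0. Qed.

Lemma absc_le_ReIm (z : C) : absc z <= `|complex.Re z| + `|complex.Im z|.
Proof.
rewrite [in leLHS](complexE z); apply: le_trans (ler_abscD _ _) _.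
rewrite abscM !absc_real.
have -> : absc 'i%C = 1 :> R by rewrite /absc /= expr0n expr1n add0r sqrtr1.
by rewrite mul1r.
Qed.

End ComplexModulus.

Section ScalarLinear.
Variable R : realType.
Local Notation C := (R[i]).
Variables (A : lmodType C) (V : A -> Prop) (f : A -> C).
Hypothesis V0 : V 0.
Hypothesis f_lin : forall (c : C) x y, V x -> V y -> f (c *: x + y) = c * f x + f y.

Lemma linear_on0 : f 0 = 0.
Proof.
apply: (@addrI _ (f 0)); rewrite addr0.
by have := f_lin 1 V0 V0; rewrite scale1r addr0 mul1r.
Qed.

Lemma linear_onZ (c : C) x : V x -> f (c *: x) = c * f x.
Proof. by move=> Vx; have := f_lin c Vx V0; rewrite !addr0 linear_on0 addr0. Qed.

Lemma linear_onB x y : V x -> V y -> f (x - y) = f x - f y.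
Proof. by move=> Vx Vy; rewrite addrC -scaleN1r f_lin // mulN1r addrC. Qed.

End ScalarLinear.

Section ScalarLinearTotal.
Variable R : realType.
Local Notation C := (R[i]).
Variables (A : lmodType C) (f : A -> C).
Hypothesis f_lin : forall (c : C) x y, f (c *: x + y) = c * f x + f y.

Let f_lin_on (c : C) x y (_ : True) (_ : True) := f_lin c x y.

Lemma scalar_linear0 : f 0 = 0.
Proof. exact: (linear_on0 I f_lin_on). Qed.

Lemma scalar_linearZ (c : C) x : f (c *: x) = c * f x.
Proof. exact: (linear_onZ I f_lin_on). Qed.

Lemma scalar_linearB x y : f (x - y) = f x - f y.
Proof. exact: (linear_onB f_lin_on). Qed.

End ScalarLinearTotal.

Section ScalarSequences.
Variable R : realType.
Local Notation C := (R[i]).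

Lemma bounded_le_sup (E : set R) x0 B : E x0 -> (forall x, E x -> x <= B) ->
  forall x, E x -> x <= sup E.
Proof. by move=> Ex0 EB x Ex; apply: sup_upper_bound => //; split; [exists x0|exists B]. Qed.

Lemma bounded_sup_adherent (E : set R) x0 B eps : E x0 -> (forall x, E x -> x <= B) ->
  0 < eps -> exists2 x, E x & sup E - eps < x.
Proof. by move=> Ex0 EB e0; apply: sup_adherent => //; split; [exists x0|exists B]. Qed.

Lemma cauchy_cvgR (v : nat -> R) :
  (forall eps, 0 < eps -> exists N, forall m n,
        (N <= m)%N -> (N <= n)%N -> `|v m - v n| < eps) ->
  exists l, forall eps, 0 < eps -> exists N, forall n, (N <= n)%N -> `|v n - l| < eps.
Proof.
move=> hC.
pose X := [set x | exists N, forall n, (N <= n)%N -> x <= v n].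
have [N0 h0] := hC 1 ltr01.
have X0 : X (v N0 - 1).
  by exists N0 => n hn; move: (h0 n N0 hn (leqnn _)); rewrite ltr_distl => /andP[h _]; lra.
have Xb x : X x -> x <= v N0 + 1.
  move=> [N hN]; have := hN (maxn N N0) (leq_maxl _ _).
  by move: (h0 (maxn N N0) N0 (leq_maxr _ _) (leqnn _)); rewrite ltr_distl => /andP[_ h]; lra.
exists (sup X) => eps e0.
have [N1 h1] := hC _ (divr_gt0 e0 (ltr0n _ 2)).
exists N1 => n hn; rewrite ltr_distl; apply/andP; split.
- suff : sup X <= v n + eps / 2%:R by lra.
  apply: ge_sup; first by exists (v N0 - 1).
  move=> x [N hN]; have := hN (maxn N N1) (leq_maxl _ _).
  by move: (h1 (maxn N N1) n (leq_maxr _ _) hn); rewrite ltr_distl => /andP[_ h]; lra.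
- suff : v n - eps / 2%:R <= sup X by lra.
  apply: (bounded_le_sup X0 Xb); exists N1 => m hm.
  by move: (h1 n m hn hm); rewrite ltr_distl => /andP[_ h]; lra.
Qed.

Lemma invSn_eventually_lt (eps : R) : 0 < eps ->
  exists N, forall n, (N <= n)%N -> n.+1%:R^-1 < eps.
Proof.
move=> e0; have [k hk] := ltr_add_invr e0; rewrite add0r in hk.
exists k => n hn; apply: le_lt_trans hk.
by rewrite lef_pV2 ?posrE ?ltr0n // ler_nat.
Qed.

Definition cvgC (u : nat -> C) (l : C) :=
  forall eps : R, 0 < eps -> exists N, forall n, (N <= n)%N -> absc (u n - l) < eps.

Lemma cauchy_cvgC (u : nat -> C) :
  (forall eps : R, 0 < eps -> exists N, forall m n,
        (N <= m)%N -> (N <= n)%N -> absc (u m - u n) < eps) ->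
  exists l, cvgC u l.
Proof.
move=> hC.
have [a ha] : exists a, forall eps, 0 < eps -> exists N, forall n, (N <= n)%N ->
    `|complex.Re (u n) - a| < eps.
  apply: cauchy_cvgR => e e0; have [N hN] := hC e e0; exists N => m n hm hn.
  by rewrite -raddfB; apply: le_lt_trans (ler_Re_absc _) (hN m n hm hn).
have [b hb] : exists b, forall eps, 0 < eps -> exists N, forall n, (N <= n)%N ->
    `|complex.Im (u n) - b| < eps.
  apply: cauchy_cvgR => e e0; have [N hN] := hC e e0; exists N => m n hm hn.
  by rewrite -raddfB; apply: le_lt_trans (ler_Im_absc _) (hN m n hm hn).
exists (a +i* b) => e e0.
have e2 : 0 < e / 2%:R by rewrite divr_gt0.
have [N1 h1] := ha _ e2; have [N2 h2] := hb _ e2.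
exists (maxn N1 N2) => n hn; apply: le_lt_trans (absc_le_ReIm _) _.
rewrite !raddfB /=.
have := h1 n (leq_trans (leq_maxl _ _) hn); have := h2 n (leq_trans (leq_maxr _ _) hn).
lra.
Qed.

Lemma absc_infinitesimal_eq0 (z : C) : (forall eps : R, 0 < eps -> absc z < eps) -> z = 0.
Proof.
move=> h; apply: absc_eq0; apply/le_anti; rewrite absc_ge0 andbT.
by apply/ler_addgt0Pr => e e0; rewrite add0r ltW ?h.
Qed.

Lemma cvgC_le (u : nat -> C) l w (B : R) N : cvgC u l ->
  (forall n, (N <= n)%N -> absc (u n - w) <= B) -> absc (l - w) <= B.
Proof.
move=> ul uB; apply/ler_addgt0Pr => e e0.
have [N1 h1] := ul e e0; pose n := maxn N N1.
have := uB n (leq_maxl _ _); have := h1 n (leq_maxr _ _).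
have := ler_abscD (l - u n) (u n - w); rewrite absc_distC addrA subrK; lra.
Qed.

Lemma cvgC_unique (u : nat -> C) l1 l2 : cvgC u l1 -> cvgC u l2 -> l1 = l2.
Proof.
move=> h1 h2; apply/eqP; rewrite -subr_eq0; apply/eqP.
apply: absc_infinitesimal_eq0 => e e0.
have e2 : 0 < e / 2%:R by rewrite divr_gt0.
have [N1 g1] := h1 _ e2; have [N2 g2] := h2 _ e2; pose n := maxn N1 N2.
have := g1 n (leq_maxl _ _); have := g2 n (leq_maxr _ _).
have := ler_abscD (l1 - u n) (u n - l2); rewrite absc_distC addrA subrK; lra.
Qed.

Lemma cvgC_lin (u v : nat -> C) lu lv (c : C) : cvgC u lu -> cvgC v lv ->
  cvgC (fun n => c * u n + v n) (c * lu + lv).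
Proof.
move=> hu hv e e0.
have k0 : 0 < absc c + 1 by have := absc_ge0 c; lra.
have e2 : 0 < e / 2%:R by rewrite divr_gt0.
have [N1 g1] := hu _ (divr_gt0 e2 k0); have [N2 g2] := hv _ e2.
exists (maxn N1 N2) => n hn.
have h1 := g1 n (leq_trans (leq_maxl _ _) hn).
have h2 := g2 n (leq_trans (leq_maxr _ _) hn).
have -> : c * u n + v n - (c * lu + lv) = c * (u n - lu) + (v n - lv) by ring.
apply: le_lt_trans (ler_abscD _ _) _; rewrite abscM.
have : absc c * absc (u n - lu) <= absc c * (e / 2%:R / (absc c + 1)).
  by rewrite ler_wpM2l ?absc_ge0 // ltW.
have : absc c * (e / 2%:R / (absc c + 1)) <= e / 2%:R.
  by rewrite mulrA ler_pdivrMr // [absc c * _]mulrC ler_wpM2l ?ltW //; lra.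
lra.
Qed.

End ScalarSequences.

Section WeakContinuity.
Variable R : realType.
Local Notation C := (R[i]).

Definition sigma_cont (A : Type) (P : set (A -> C)) (phi : A -> C) : Prop :=
  forall (a0 : A) (eps : R), 0 < eps ->
    exists (n : nat) (fs : 'I_n -> A -> C) (delta : R),
      [/\ 0 < delta, (forall i, P (fs i)) &
          forall b, (forall i, absc (fs i b - fs i a0) < delta) ->
             absc (phi b - phi a0) < eps].

Lemma wcontP (A B : Type) (P : set (A -> C)) (Q : set (B -> C)) (T : A -> B) :
  wcont P Q T <-> forall g, Q g -> sigma_cont P (fun a => g (T a)).
Proof. by split=> h; [move=> g Qg a0 eps|move=> a g eps Qg]; apply: h. Qed.

Lemma sigma_cont_mem (A : Type) (P : set (A -> C)) f : P f -> sigma_cont P f.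
Proof.
by move=> Pf a0 eps e0; exists 1%N, (fun _ => f), eps; split=> // b; apply; exact: ord0.
Qed.

Variables (A : lmodType C) (P : set (A -> C)).
Hypothesis P_linear : forall f, P f -> forall (c : C) x y, f (c *: x + y) = c * f x + f y.
Hypothesis P0 : P (fun _ => 0).
Hypothesis P_lin : forall (c : C) f g, P f -> P g -> P (fun x => c * f x + g x).

Lemma common_kernel_span (n : nat) (fs : 'I_n -> A -> C) (V : A -> Prop) (phi : A -> C) :
  (forall i, P (fs i)) ->
  (forall (c : C) x y, V x -> V y -> V (c *: x + y)) ->
  (forall (c : C) x y, phi (c *: x + y) = c * phi x + phi y) ->
  (forall b, V b -> (forall i, fs i b = 0) -> phi b = 0) ->
  exists2 g, P g & forall b, V b -> phi b = g b.
Proof.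
(* Induction on n: drop f := fs ord_max if it vanishes on V, else correct the
   functional given by the induction hypothesis on V /\ ker f by a multiple of f. *)
elim: n fs V => [|n IH] fs V Pfs V_lin phi_lin phi_ker.
  by exists (fun _ => 0) => // b Vb; apply: phi_ker => // -[].
pose f := fs ord_max.
have f_lin (c : C) x y : f (c *: x + y) = c * f x + f y := P_linear (Pfs ord_max) c x y.
have [||||g Pg phi_g] := IH (fun i => fs (lift ord_max i)) (fun b => V b /\ f b = 0) => //.
- move=> c x y [Vx fx] [Vy fy]; split; first exact: V_lin.
  by rewrite f_lin fx fy mulr0 addr0.
- move=> b [Vb fb] h; apply: phi_ker => // i.
  by case: (unliftP ord_max i) => [j ->|->] //; apply: h.
have g_lin := P_linear Pg.
have [[b0 [Vb0 /eqP fb0]]|f_off] := pselect (exists b0, V b0 /\ f b0 <> 0); last first.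
  exists g => // b Vb; apply: phi_g; split => //.
  by apply: contrapT => fb; apply: f_off; exists b.
pose k := (phi b0 - g b0) / f b0.
exists (fun x => k * f x + g x); first exact: P_lin (Pfs ord_max) Pg.
move=> b Vb; pose t := f b / f b0.
have : phi ((- t) *: b0 + b) = g ((- t) *: b0 + b).
  apply: phi_g; split; first exact: V_lin.
  by rewrite f_lin /t mulNr -mulrA mulVf // mulr1 addNr.
rewrite phi_lin g_lin => e.
have -> : phi b = (- t * g b0 + g b) + t * phi b0 by rewrite -e; ring.
by rewrite /k /t; field.
Qed.

Lemma sigma_cont_linear_mem (phi : A -> C) :
  (forall (c : C) x y, phi (c *: x + y) = c * phi x + phi y) ->
  sigma_cont P phi -> P phi.
Proof.
move=> phi_lin /(_ 0 1 ltr01) [n [fs [delta [d0 Pfs phi_cont]]]].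
have [|||g Pg phi_g] := @common_kernel_span n fs (fun _ => True) phi Pfs => //.
  (* Continuity at 0 gives |phi| < 1 on the common kernel; scaling b forces phi b = 0. *)
  move=> b _ fs_b; apply: contrapT => /eqP phib.
  pose t : C := (2%:R / absc (phi b))%:C.
  have : absc (phi (t *: b + 0) - phi 0) < 1.
    apply: phi_cont => i.
    by rewrite addr0 (scalar_linearZ (P_linear (Pfs i))) fs_b
      (scalar_linear0 (P_linear (Pfs i))) mulr0 subrr absc0.
  rewrite phi_lin (scalar_linear0 phi_lin) !addr0 subr0 abscM /t absc_real.
  rewrite ger0_norm ?divr_ge0 ?absc_ge0 // divfK ?gt_eqF ?absc_gt0 //; lra.
by rewrite (funext (fun b => phi_g b I)).
Qed.

End WeakContinuity.

Section RealHahnBanach.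
Variable R : realType.
Local Notation C := (R[i]).
Variables (A : lmodType C) (p : A -> R).
Hypothesis p_homo : forall (s : R) x, 0 < s -> p (s%:C *: x) = s * p x.
Hypothesis p_subadd : forall x y, p (x + y) <= p x + p y.
Variables (S : A -> Prop) (u0 : A -> R).
Hypothesis S_lin : forall (t : R) x y, S x -> S y -> S (t%:C *: x + y).
Hypothesis S0 : S 0.
Hypothesis u0_lin : forall (t : R) x y, S x -> S y -> u0 (t%:C *: x + y) = t * u0 x + u0 y.
Hypothesis u0_le : forall x, S x -> u0 x <= p x.

Definition dominated_extension_graph (G : set (A * R)) : Prop :=
  [/\ (forall x r1 r2, G (x, r1) -> G (x, r2) -> r1 = r2),
      (forall x1 r1 x2 r2 (t : R), G (x1, r1) -> G (x2, r2) ->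
          G (t%:C *: x1 + x2, t * r1 + r2)),
      (forall x, S x -> G (x, u0 x))
    & (forall x r, G (x, r) -> r <= p x)].

Definition graph_extend (G : set (A * R)) (x0 : A) (c : R) : set (A * R) :=
  [set w | exists y r (t : R), G (y, r) /\ w = (y + t%:C *: x0, r + t * c)].

Let u0_0 : u0 0 = 0.
Proof.
apply: (@addrI _ (u0 0)); rewrite addr0.
by have := u0_lin 1 S0 S0; rewrite rmorph1 scale1r addr0 mul1r.
Qed.

Section OneStepExtension.
Variables (G : set (A * R)) (x0 : A).
Hypothesis G_ext : dominated_extension_graph G.
Hypothesis x0_notin : forall r, ~ G (x0, r).

Let G_fun : forall x r1 r2, G (x, r1) -> G (x, r2) -> r1 = r2.
Proof. by case: G_ext. Qed.
Let G_lin : forall x1 r1 x2 r2 (t : R), G (x1, r1) -> G (x2, r2) ->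
  G (t%:C *: x1 + x2, t * r1 + r2).
Proof. by case: G_ext. Qed.
Let G_le : forall x r, G (x, r) -> r <= p x.
Proof. by case: G_ext. Qed.

Let G00 : G (0, 0).
Proof. by case: G_ext => _ _ GS _; rewrite -u0_0; apply: GS. Qed.

Let G_scale y r (s : R) : G (y, r) -> G (s%:C *: y, s * r).
Proof. by move=> Gy; have := G_lin s Gy G00; rewrite !addr0. Qed.

Lemma extension_constant_exists : exists c : R,
  (forall z r, G (z, r) -> r - p (z - x0) <= c) /\
  (forall z r, G (z, r) -> c <= p (z + x0) - r).
Proof.
pose V := [set v | exists z r, G (z, r) /\ v = r - p (z - x0)].
have V_ub z2 r2 : G (z2, r2) -> forall v, V v -> v <= p (z2 + x0) - r2.
  move=> G2 v [z [r [Gz ->]]].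
  have := G_le (G_lin 1 Gz G2); rewrite scale1r mul1r.
  have := p_subadd (z - x0) (z2 + x0).
  rewrite addrACA addNr addr0; lra.
exists (sup V); split => [z r Gz|z r Gz].
- by apply: (bounded_le_sup _ (V_ub _ _ G00)); [exists 0, 0|exists z, r].
- by apply: ge_sup; [exists (0 - p (0 - x0)), 0, 0|exact: V_ub].
Qed.

Variable c : R.
Hypothesis c_lb : forall z r, G (z, r) -> r - p (z - x0) <= c.
Hypothesis c_ub : forall z r, G (z, r) -> c <= p (z + x0) - r.

Lemma graph_extend_functional x r1 r2 :
  graph_extend G x0 c (x, r1) -> graph_extend G x0 c (x, r2) -> r1 = r2.
Proof.
move=> [y1 [s1 [t1 [G1 [ex1 er1]]]]] [y2 [s2 [t2 [G2 [ex2 er2]]]]].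
have e12 : y1 + t1%:C *: x0 = y2 + t2%:C *: x0 by rewrite -ex1 -ex2.
have [et|nt] := eqVneq t1 t2.
  move: e12; rewrite -et => /addIr ey; subst y2.
  by rewrite er1 er2 -et (G_fun G1 G2).
case: (@x0_notin ((t1 - t2)^-1 * (s2 - s1))).
have G21 : G (y2 - y1, s2 - s1).
  by have := G_lin (-1) G1 G2; rewrite rmorphN rmorph1 scaleN1r mulN1r addrC [- s1 + _]addrC.
suff -> : x0 = ((t1 - t2)^-1)%:C *: (y2 - y1) by apply: G_scale.
have -> : y2 - y1 = (t1 - t2)%:C *: x0.
  by rewrite rmorphB scalerBl -[t1%:C *: x0](addKr y1) e12 addrA addrK addrC.
by rewrite scalerA -rmorphM mulVf ?rmorph1 ?scale1r // subr_eq0.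
Qed.

Lemma graph_extend_le x r : graph_extend G x0 c (x, r) -> r <= p x.
Proof.
move=> [y [s [t [Gy [-> ->]]]]].
have [tn|tp|->] := ltrgtP t 0; last by rewrite rmorph0 scale0r addr0 mul0r addr0; apply: G_le.
- have tp : 0 < - t by rewrite oppr_gt0.
  have := c_lb (G_scale (- t)^-1 Gy).
  have -> : p (y + t%:C *: x0) = - t * p ((- t)^-1%:C *: y - x0).
    rewrite -p_homo // scalerDr scalerA -rmorphM mulfV ?gt_eqF // rmorph1 scale1r.
    by rewrite scalerN rmorphN scaleNr opprK.
  move=> /(ler_wpM2l (ltW tp)).
  rewrite mulrBr [- t * ((- t)^-1 * s)]mulrA mulfV ?gt_eqF // mul1r; lra.
- have := c_ub (G_scale t^-1 Gy).
  have -> : p (y + t%:C *: x0) = t * p (t^-1%:C *: y + x0).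
    by rewrite -p_homo // scalerDr scalerA -rmorphM mulfV ?gt_eqF // rmorph1 scale1r.
  move=> /(ler_wpM2l (ltW tp)).
  rewrite mulrBr [t * (t^-1 * s)]mulrA mulfV ?gt_eqF // mul1r; lra.
Qed.

Lemma graph_extend_dominated : dominated_extension_graph (graph_extend G x0 c).
Proof.
split.
- exact: graph_extend_functional.
- move=> x1 r1 x2 r2 t [y1 [s1 [t1 [G1 [-> ->]]]]] [y2 [s2 [t2 [G2 [-> ->]]]]].
  exists (t%:C *: y1 + y2), (t * s1 + s2), (t * t1 + t2); split; first exact: G_lin.
  congr pair; last by ring.
  by rewrite scalerDr scalerA -rmorphM rmorphD scalerDl addrACA.
- move=> x Sx; exists x, (u0 x), 0; split; first by case: G_ext => _ _ GS _; apply: GS.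
  by rewrite rmorph0 scale0r addr0 mul0r addr0.
- exact: graph_extend_le.
Qed.

Lemma graph_extend_proper : G `<` graph_extend G x0 c.
Proof.
split=> [[y r] Gy|sub]; first by exists y, r, 0; rewrite rmorph0 scale0r addr0 mul0r addr0.
case: (@x0_notin c); apply: sub; exists 0, 0, 1.
by rewrite rmorph1 scale1r add0r mul1r add0r.
Qed.

End OneStepExtension.

Let empty_or_dominated (G : set (A * R)) := G = set0 \/ dominated_extension_graph G.

Lemma dominated_graph_chain_union (F : set (set (A * R))) :
  F `<=` empty_or_dominated -> total_on F subset ->
  empty_or_dominated (\bigcup_(X in F) X).
Proof.
move=> FP Ftot.
have F_ext X z : F X -> X z -> dominated_extension_graph X.
  by move=> FX Xz; case: (FP X FX) => // X0; rewrite X0 in Xz.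
have common X1 X2 z1 z2 : F X1 -> F X2 -> X1 z1 -> X2 z2 -> exists X, [/\ F X, X z1 & X z2].
  move=> F1 F2 h1 h2; case: (Ftot X1 X2 F1 F2) => sub.
    by exists X2; split => //; apply: sub.
  by exists X1; split => //; apply: sub.
have [[z0 [X0 FX0 X0z0]]|empty] := pselect (exists z, (\bigcup_(X in F) X) z); last first.
  by left; apply/seteqP; split => // z Uz; apply: empty; exists z.
right; have [_ _ GS _] := F_ext _ _ FX0 X0z0; split.
- move=> x r1 r2 [X1 F1 h1] [X2 F2 h2].
  have [X [FX h1' h2']] := common _ _ _ _ F1 F2 h1 h2.
  by have [Xf _ _ _] := F_ext _ _ FX h1'; apply: Xf h1' h2'.
- move=> x1 r1 x2 r2 t [X1 F1 h1] [X2 F2 h2].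
  have [X [FX h1' h2']] := common _ _ _ _ F1 F2 h1 h2.
  by have [_ Xl _ _] := F_ext _ _ FX h1'; exists X => //; apply: Xl.
- by move=> x Sx; exists X0 => //; apply: GS.
- by move=> x r [X FX h]; have [_ _ _ Xd] := F_ext _ _ FX h; apply: Xd.
Qed.

Lemma total_dominated_extension_graph : exists G,
  dominated_extension_graph G /\ forall x, exists r, G (x, r).
Proof.
have [G [[G0|G_ext] G_max]] := Zorn_bigcup dominated_graph_chain_union.
- pose G0' := [set z : A * R | S z.1 /\ z.2 = u0 z.1].
  have G0'_ext : dominated_extension_graph G0'.
    split=> [x r1 r2 [_ /= ->] [_ /= ->] //|x1 r1 x2 r2 t [/= S1 ->] [/= S2 ->]| x Sx //|].
    + by split; [exact: S_lin|rewrite /= u0_lin].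
    + by move=> x r [/= Sx ->]; apply: u0_le.
  exfalso; apply: (G_max G0'); last by right.
  rewrite G0; split=> // sub; have : G0' (0, u0 0) by [].
  by move=> /sub.
- exists G; split => // x0; apply: contrapT => x0_notin.
  have {}x0_notin r : ~ G (x0, r) by move=> Gx0; apply: x0_notin; exists r.
  have [c [c_lb c_ub]] := extension_constant_exists x0 G_ext.
  apply: (G_max (graph_extend G x0 c)); first exact: graph_extend_proper.
  by right; apply: graph_extend_dominated.
Qed.

Lemma real_hahn_banach : exists u : A -> R,
  [/\ forall (t : R) x y, u (t%:C *: x + y) = t * u x + u y,
      forall x, u x <= p x
    & forall x, S x -> u x = u0 x].
Proof.
have [G [[G_fun G_lin GS G_le] G_tot]] := total_dominated_extension_graph.
have [u Gu] := choice G_tot.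
exists u; split=> [t x y|x|x Sx]; last exact: G_fun (Gu x) (GS x Sx).
- exact: G_fun (Gu _) (G_lin _ _ _ _ t (Gu x) (Gu y)).
- exact: G_le (Gu x).
Qed.

End RealHahnBanach.

Section HahnBanach.
Variable R : realType.
Local Notation C := (R[i]).
Variables (A : lmodType C) (nA : A -> R).
Hypothesis nA_ge0 : forall x, 0 <= nA x.
Hypothesis nAZ : forall (c : C) x, nA (c *: x) = absc c * nA x.
Hypothesis nAD : forall x y, nA (x + y) <= nA x + nA y.
Variables (S : A -> Prop) (psi : A -> C) (M : R).
Hypothesis S_lin : forall (c : C) x y, S x -> S y -> S (c *: x + y).
Hypothesis S0 : S 0.
Hypothesis psi_lin : forall (c : C) x y, S x -> S y -> psi (c *: x + y) = c * psi x + psi y.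
Hypothesis M0 : 0 <= M.
Hypothesis psi_le : forall x, S x -> absc (psi x) <= M * nA x.

Let Re_realMl (t : R) (w : C) : complex.Re (t%:C * w) = t * complex.Re w.
Proof. by case: w => a b /=; rewrite mul0r subr0. Qed.

Lemma hahn_banach : exists2 Psi : A -> C, dual_elt nA Psi & forall x, S x -> Psi x = psi x.
Proof.
have [||||u [u_lin u_le u_S]] := @real_hahn_banach R A (fun x => M * nA x)
    _ _ S (fun x => complex.Re (psi x)) (fun t => S_lin t%:C) S0.
- by move=> s x s0; rewrite nAZ absc_real gtr0_norm // mulrCA.
- by move=> x y; rewrite -mulrDr ler_wpM2l.
- by move=> t x y Sx Sy; rewrite psi_lin // raddfD /= Re_realMl.
- move=> x Sx; apply: le_trans (psi_le Sx).
  exact: le_trans (ler_norm _) (ler_Re_absc _).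
pose Psi x : C := u x +i* - u ('i *: x).
have Psi_lin (c : C) x y : Psi (c *: x + y) = c * Psi x + Psi y.
  case: c => a b; rewrite /Psi.
  have -> : 'i *: ((a +i* b) *: x + y) = a%:C *: ('i *: x) + ((- b)%:C *: x + 'i *: y).
    rewrite scalerDr !scalerA addrA -scalerDl.
    by congr (_ + _); congr (_ *: _); complex_ext; ring.
  have -> : (a +i* b) *: x = a%:C *: x + b%:C *: ('i *: x).
    by rewrite scalerA -scalerDl; congr (_ *: _); complex_ext; ring.
  by rewrite -addrA !u_lin; complex_ext; ring.
exists Psi.
  split; first exact: Psi_lin.
  exists M => x; set w := Psi x.
  have [->|w0] := eqVneq w 0; first by rewrite absc0 mulr_ge0.
  (* Rotating x by l := |w| / w makes Psi (l x) = |w| real, hence equal to u (l x). *)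
  pose l := `|w| / w.
  have l1 : absc l = 1.
    by apply: (@complexI R); rewrite -normcE normf_div normr_id divff // normr_eq0.
  have -> : absc w = u (l *: x).
    suff : (absc w)%:C = Psi (l *: x) by case.
    by rewrite -normcE (scalar_linearZ Psi_lin) -/w /l divfK.
  by apply: le_trans (u_le _) _; rewrite nAZ l1 mul1r.
move=> x Sx; have Six : S ('i *: x) by have := S_lin 'i Sx S0; rewrite addr0.
rewrite /Psi !u_S // (linear_onZ S0 psi_lin _ Sx).
by case: (psi x) => a b; complex_ext; ring.
Qed.

End HahnBanach.

Section SubspaceDualType.
Variable R : realType.
Local Notation C := (R[i]).
Variables (A : lmodType C) (nA : A -> R) (S : A -> Prop).

(* Elements of S^* are represented by functions on all of A, normalised to vanish off S
   so that they are determined by their values on S. *)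
Definition subdual_pred (F : A -> C) : Prop :=
  [/\ forall x, ~ S x -> F x = 0,
      forall (c : C) x y, S x -> S y -> F (c *: x + y) = c * F x + F y
    & exists M : R, forall x, S x -> absc (F x) <= M * nA x].

Record subdual := Subdual { subdual_fun :> A -> C; subdual_funP : subdual_pred subdual_fun }.

Lemma subdual_fun_inj (F G : subdual) : subdual_fun F = subdual_fun G -> F = G.
Proof.
by case: F => f pf; case: G => g pg /= fg; subst g; rewrite (Prop_irrelevance pf pg).
Qed.

Lemma subdual_pred0 : subdual_pred (fun _ => 0).
Proof.
split=> // [c x y _ _|]; first by rewrite mulr0 addr0.
by exists 0 => x _; rewrite absc0 mul0r.
Qed.

Lemma subdual_pred_add (F G : subdual) : subdual_pred (fun x => F x + G x).
Proof.
case: F G => f [f0 f_lin [M1 f_le]] [g [g0 g_lin [M2 g_le]]]; split => /=.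
- by move=> x Sx; rewrite f0 // g0 // addr0.
- by move=> c x y Sx Sy; rewrite f_lin // g_lin //; ring.
- exists (M1 + M2) => x Sx; apply: le_trans (ler_abscD _ _) _.
  by rewrite mulrDl lerD ?f_le ?g_le.
Qed.

Lemma subdual_pred_opp (F : subdual) : subdual_pred (fun x => - F x).
Proof.
case: F => f [f0 f_lin [M f_le]]; split => /=.
- by move=> x Sx; rewrite f0 // oppr0.
- by move=> c x y Sx Sy; rewrite f_lin //; ring.
- by exists M => x Sx; rewrite abscN f_le.
Qed.

Lemma subdual_pred_scale (c : C) (F : subdual) : subdual_pred (fun x => c * F x).
Proof.
case: F => f [f0 f_lin [M f_le]]; split => /=.
- by move=> x Sx; rewrite f0 // mulr0.
- by move=> k x y Sx Sy; rewrite f_lin //; ring.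
- by exists (absc c * M) => x Sx; rewrite abscM -mulrA ler_wpM2l ?absc_ge0 ?f_le.
Qed.

Definition subdual_zero := Subdual subdual_pred0.
Definition subdual_add F G := Subdual (subdual_pred_add F G).
Definition subdual_opp F := Subdual (subdual_pred_opp F).
Definition subdual_scale c F := Subdual (subdual_pred_scale c F).

HB.instance Definition _ := gen_eqMixin subdual.
HB.instance Definition _ := gen_choiceMixin subdual.

Let subdual_funext (F G : subdual) : (forall x, F x = G x) -> F = G.
Proof. by move=> FG; apply/subdual_fun_inj/funext. Qed.

Lemma subdual_addA : associative subdual_add.
Proof. by move=> F G H; apply: subdual_funext => x /=; rewrite addrA. Qed.
Lemma subdual_addC : commutative subdual_add.
Proof. by move=> F G; apply: subdual_funext => x /=; rewrite addrC. Qed.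
Lemma subdual_add0 : left_id subdual_zero subdual_add.
Proof. by move=> F; apply: subdual_funext => x /=; rewrite add0r. Qed.
Lemma subdual_addN : left_inverse subdual_zero subdual_opp subdual_add.
Proof. by move=> F; apply: subdual_funext => x /=; rewrite addNr. Qed.

HB.instance Definition _ :=
  GRing.isZmodule.Build subdual subdual_addA subdual_addC subdual_add0 subdual_addN.

Lemma subdual_scaleA a b F : subdual_scale a (subdual_scale b F) = subdual_scale (a * b) F.
Proof. by apply: subdual_funext => x /=; rewrite mulrA. Qed.
Lemma subdual_scale1 : left_id 1 subdual_scale.
Proof. by move=> F; apply: subdual_funext => x /=; rewrite mul1r. Qed.
Lemma subdual_scaleDr : right_distributive subdual_scale +%R.
Proof. by move=> a F G; apply: subdual_funext => x /=; rewrite mulrDr. Qed.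
Lemma subdual_scaleDl F : {morph subdual_scale^~ F : a b / a + b}.
Proof. by move=> a b; apply: subdual_funext => x /=; rewrite mulrDl. Qed.

HB.instance Definition _ := GRing.Zmodule_isLmodule.Build C subdual
  subdual_scaleA subdual_scale1 subdual_scaleDr subdual_scaleDl.

Lemma subdual_addE (F G : subdual) x : (F + G) x = F x + G x. Proof. by []. Qed.
Lemma subdual_subE (F G : subdual) x : (F - G) x = F x - G x. Proof. by []. Qed.
Lemma subdual_scaleE c (F : subdual) x : (c *: F) x = c * F x. Proof. by []. Qed.

End SubspaceDualType.

Section SubspaceDual.
Variable R : realType.
Local Notation C := (R[i]).
Variables (A : lmodType C) (nA : A -> R) (S : A -> Prop).
Hypothesis nA_norm : is_norm nA.
Hypothesis nA_complete : complete_norm nA.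
Hypothesis S_lin : forall (c : C) x y, S x -> S y -> S (c *: x + y).
Hypothesis S0 : S 0.
Hypothesis S_closed : forall (u : nat -> A) x, (forall n, S (u n)) ->
  (forall eps, 0 < eps -> exists N, forall n, (N <= n)%N -> nA (u n - x) < eps) -> S x.
Hypothesis nA_norming : forall x (eps : R), 0 < eps ->
  exists f, [/\ dual_elt nA f, opnorm_le nA f 1 & nA x - eps < absc (f x)].

Local Notation E := (subdual nA S).

Let nA_ge0 x : 0 <= nA x. Proof. by case: nA_norm. Qed.
Let nA_eq0 x : nA x = 0 -> x = 0. Proof. by case: nA_norm => _ h _ _; apply: h. Qed.
Let nAZ (c : C) x : nA (c *: x) = absc c * nA x. Proof. by case: nA_norm. Qed.
Let nA0 : nA 0 = 0. Proof. by rewrite -(scale0r 0) nAZ absc0 mul0r. Qed.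
Let S_scale (c : C) x : S x -> S (c *: x).
Proof. by move=> Sx; have := S_lin c Sx S0; rewrite addr0. Qed.
Let S_sub x y : S x -> S y -> S (x - y).
Proof. by move=> Sx Sy; have := S_lin (-1) Sy Sx; rewrite scaleN1r addrC. Qed.

Lemma subdual_off (F : E) x : ~ S x -> F x = 0.
Proof. by case: (subdual_funP F) => f0 _ _; apply: f0. Qed.

Lemma subdual_lin (F : E) (c : C) x y : S x -> S y -> F (c *: x + y) = c * F x + F y.
Proof. by case: (subdual_funP F) => _ f_lin _; apply: f_lin. Qed.

Lemma subdual_bounded (F : E) : exists M, forall x, S x -> absc (F x) <= M * nA x.
Proof. by case: (subdual_funP F). Qed.

Lemma subdual_eq (F G : E) : (forall x, S x -> F x = G x) -> F = G.
Proof.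
move=> FG; apply/subdual_fun_inj/funext => x.
by have [/FG //|Sx] := pselect (S x); rewrite !subdual_off.
Qed.

Definition restrict (f : A -> C) (y : A) : C := if `[< S y >] then f y else 0.

Lemma restrictE f y : S y -> restrict f y = f y.
Proof. by move=> Sy; rewrite /restrict asboolT. Qed.

Lemma restrict_subdual_pred (f : A -> C) (M : R) :
  (forall (c : C) x y, S x -> S y -> f (c *: x + y) = c * f x + f y) ->
  (forall x, S x -> absc (f x) <= M * nA x) -> subdual_pred nA S (restrict f).
Proof.
move=> f_lin f_le; split.
- by move=> x Sx; rewrite /restrict asboolF.
- by move=> c x y Sx Sy; rewrite (restrictE _ (S_lin c Sx Sy)) !restrictE ?f_lin.
- by exists M => x Sx; rewrite restrictE ?f_le.
Qed.

Definition subdual_norm_set (F : E) : set R :=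
  [set r | exists x, [/\ S x, nA x <= 1 & r = absc (F x)]].

Definition subdual_norm (F : E) : R := sup (subdual_norm_set F).

Let norm_set0 (F : E) : subdual_norm_set F 0.
Proof. by exists 0; rewrite nA0 (linear_on0 S0 (subdual_lin F)) absc0. Qed.

Let norm_set_bounded (F : E) : exists B, forall r, subdual_norm_set F r -> r <= B.
Proof.
have [M F_le] := subdual_bounded F; exists `|M| => _ [x [Sx x1 ->]].
apply: le_trans (F_le _ Sx) (le_trans (ler_wpM2r (nA_ge0 x) (ler_norm M)) _).
by rewrite -[leRHS]mulr1 ler_wpM2l.
Qed.

Lemma subdual_norm_ge0 (F : E) : 0 <= subdual_norm F.
Proof.
by have [B hB] := norm_set_bounded F; exact: bounded_le_sup (norm_set0 F) hB _ (norm_set0 F).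
Qed.

Lemma subdual_norm_bound (F : E) x : S x -> absc (F x) <= subdual_norm F * nA x.
Proof.
move=> Sx; have [/nA_eq0 ->|nx0] := eqVneq (nA x) 0.
  by rewrite (linear_on0 S0 (subdual_lin F)) absc0 nA0 mulr0.
have nx : 0 < nA x by rewrite lt_def nx0 nA_ge0.
have ax : absc ((nA x)^-1)%:C = (nA x)^-1 by rewrite absc_real ger0_norm ?invr_ge0.
have [B hB] := norm_set_bounded F.
have key : (nA x)^-1 * absc (F x) <= subdual_norm F.
  rewrite -ax -abscM -(linear_onZ S0 (subdual_lin F)) //.
  apply: (bounded_le_sup (norm_set0 F) hB); exists ((nA x)^-1%:C *: x).
  by split=> //; [exact: S_scale|rewrite nAZ ax mulVf].
by rewrite mulrC -ler_pdivrMl.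
Qed.

Lemma subdual_norm_le (F : E) (B : R) : 0 <= B ->
  (forall x, S x -> absc (F x) <= B * nA x) -> subdual_norm F <= B.
Proof.
move=> B0 F_le; apply: ge_sup; first by exists 0.
move=> _ [x [Sx x1 ->]]; apply: le_trans (F_le _ Sx) _.
by rewrite -[leRHS]mulr1 ler_wpM2l.
Qed.

Lemma subdual_norm_adherent (F : E) (eps : R) : 0 < eps ->
  exists x, [/\ S x, nA x <= 1 & subdual_norm F - eps < absc (F x)].
Proof.
move=> e0; have [B hB] := norm_set_bounded F.
by have [_ [x [Sx x1 ->]] ?] := bounded_sup_adherent (norm_set0 F) hB e0; exists x.
Qed.

Lemma subdual_is_norm : is_norm subdual_norm.
Proof.
have normZ_le (c : C) (F : E) : subdual_norm (c *: F) <= absc c * subdual_norm F.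
  apply: subdual_norm_le => [|x Sx]; first by rewrite mulr_ge0 ?absc_ge0 ?subdual_norm_ge0.
  by rewrite subdual_scaleE abscM -mulrA ler_wpM2l ?absc_ge0 ?subdual_norm_bound.
split=> [F|F F0|c F|F G].
- exact: subdual_norm_ge0.
- apply: subdual_eq => x Sx; apply: absc_eq0; apply/le_anti.
  by rewrite absc_ge0 andbT (le_trans (subdual_norm_bound F Sx)) // F0 mul0r.
- apply/le_anti; rewrite normZ_le /=.
  have [->|c0] := eqVneq c 0; first by rewrite absc0 mul0r subdual_norm_ge0.
  have ac := absc_gt0 c0.
  have acV : absc c^-1 = (absc c)^-1.
    apply: (@mulfI _ (absc c)); first by rewrite gt_eqF.
    by rewrite -abscM !mulfV ?absc1 // gt_eqF.
  rewrite -ler_pdivlMl // -acV.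
  by have := normZ_le c^-1 (c *: F); rewrite scalerA mulVf // scale1r.
- apply: subdual_norm_le => [|x Sx]; first by rewrite addr_ge0 ?subdual_norm_ge0.
  rewrite subdual_addE mulrDl; apply: le_trans (ler_abscD _ _) _.
  by rewrite lerD ?subdual_norm_bound.
Qed.

Lemma subdual_complete : complete_norm subdual_norm.
Proof.
move=> u u_cauchy.
have u_pt x : S x -> exists l, cvgC (fun n => u n x) l.
  move=> Sx; apply: cauchy_cvgC => e e0.
  have k0 : 0 < nA x + 1 by have := nA_ge0 x; lra.
  have [N hN] := u_cauchy (e / (nA x + 1)) (divr_gt0 e0 k0).
  exists N => m n hm hn; rewrite -subdual_subE.
  apply: le_lt_trans (subdual_norm_bound _ Sx) _.
  apply: le_lt_trans (ler_wpM2r (nA_ge0 x) (ltW (hN m n hm hn))) _.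
  by rewrite mulrAC ltr_pdivrMr // ltr_pM2l //; lra.
pose g x := xget 0 [set l | cvgC (fun n => u n x) l].
have g_S x : S x -> cvgC (fun n => u n x) (g x) by move=> /u_pt; apply: xgetPex.
have g_lin (c : C) x y : S x -> S y -> g (c *: x + y) = c * g x + g y.
  move=> Sx Sy; apply: (cvgC_unique (g_S _ (S_lin c Sx Sy))).
  rewrite (funext (fun n => subdual_lin (u n) c Sx Sy)).
  exact: cvgC_lin (g_S _ Sx) (g_S _ Sy).
have [N0 h0] := u_cauchy 1 ltr01.
have g_le x : S x -> absc (g x) <= (subdual_norm (u N0) + 1) * nA x.
  move=> Sx; rewrite -[g x]subr0; apply: (cvgC_le (N := N0) (g_S _ Sx)) => n hn.
  rewrite subr0 -[u n x](subrK (u N0 x)) -subdual_subE mulrDl mul1r addrC.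
  apply: le_trans (ler_abscD _ _) (lerD (subdual_norm_bound _ Sx) _).
  apply: le_trans (subdual_norm_bound _ Sx) _.
  by rewrite ler_piMl // ltW // h0.
exists (Subdual (restrict_subdual_pred g_lin g_le)) => e e0.
have e2 : 0 < e / 2%:R by rewrite divr_gt0.
have [N hN] := u_cauchy _ e2; exists N => n hn.
apply: (@le_lt_trans _ _ (e / 2%:R)); last by rewrite ltr_pdivrMr ?ltr0n //; lra.
apply: subdual_norm_le => [|x Sx]; first exact: ltW.
rewrite subdual_subE /= restrictE // absc_distC.
apply: (cvgC_le (N := N) (g_S _ Sx)) => m hm.
rewrite -subdual_subE; apply: le_trans (subdual_norm_bound _ Sx) _.
by rewrite ler_wpM2r // ltW // hN.
Qed.

Lemma subdual_norming x (eps : R) : S x -> 0 < eps ->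
  exists F : E, subdual_norm F <= 1 /\ nA x - eps < absc (F x).
Proof.
move=> Sx e0; have [f [[f_lin _] f1 fx]] := nA_norming x e0.
have f_pred := @restrict_subdual_pred f 1 (fun c x y _ _ => f_lin c x y) (fun y _ => f1 y).
exists (Subdual f_pred); split; last by rewrite /= restrictE.
by apply: subdual_norm_le => // y Sy; rewrite /= restrictE.
Qed.

Lemma subdual_norming_le x (B : R) : S x ->
  (forall F : E, subdual_norm F <= 1 -> absc (F x) <= B) -> nA x <= B.
Proof.
move=> Sx xB; apply/ler_addgt0Pr => e e0.
by have [F [F1 Fx]] := subdual_norming Sx e0; have := xB F F1; lra.
Qed.

Definition subdual_evals : set (E -> C) := [set g | exists x, S x /\ g = (fun F : E => F x)].

Lemma subdual_eval_bound x : S x -> opnorm_le subdual_norm (fun F : E => F x) (nA x).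
Proof. by move=> Sx F; rewrite mulrC subdual_norm_bound. Qed.

Lemma subdual_evals_closed (phi : E -> C) :
  (forall eps : R, 0 < eps ->
     exists g, subdual_evals g /\ opnorm_le subdual_norm (fun F => phi F - g F) eps) ->
  subdual_evals phi.
Proof.
move=> phi_approx.
have /choice[xs xs_approx] : forall n : nat, exists x,
    S x /\ opnorm_le subdual_norm (fun F : E => phi F - F x) n.+1%:R^-1.
  move=> n; have n0 : 0 < n.+1%:R^-1 :> R by rewrite invr_gt0.
  by have [_ [[x [Sx ->]] phi_x]] := phi_approx _ n0; exists x.
have xs_S n : S (xs n) by case: (xs_approx n).
have xs_cauchy m n : nA (xs m - xs n) <= m.+1%:R^-1 + n.+1%:R^-1.
  apply: subdual_norming_le => [|F F1]; first exact: S_sub.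
  rewrite (linear_onB (subdual_lin F)) //.
  have -> : F (xs m) - F (xs n) = (phi F - F (xs n)) - (phi F - F (xs m)) by ring.
  apply: le_trans (ler_abscD _ _) _; rewrite abscN addrC.
  by apply: lerD; apply: le_trans ((xs_approx _).2 F) _; rewrite ler_piMr ?invr_ge0.
have [x xs_x] : exists x, forall eps, 0 < eps ->
    exists N, forall n, (N <= n)%N -> nA (xs n - x) < eps.
  apply: nA_complete => e e0; have [N hN] := invSn_eventually_lt (divr_gt0 e0 (ltr0n _ 2)).
  exists N => m n hm hn; apply: le_lt_trans (xs_cauchy m n) _.
  by apply: lt_le_trans (ltrD (hN m hm) (hN n hn)) _; rewrite -splitr.
have Sx := S_closed xs_S xs_x.
exists x; split => //; apply/funext => F; apply/eqP; rewrite -subr_eq0; apply/eqP.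
apply: absc_infinitesimal_eq0 => e e0.
have k0 : 0 < subdual_norm F + 1 by have := subdual_norm_ge0 F; lra.
have e2 : 0 < e / 2%:R / (subdual_norm F + 1) by rewrite !divr_gt0.
have [Na ha] := invSn_eventually_lt e2; have [Nb hb] := xs_x _ e2.
pose n := maxn Na Nb.
have -> : phi F - F x = (phi F - F (xs n)) + F (xs n - x).
  by rewrite (linear_onB (subdual_lin F)) //; ring.
apply: le_lt_trans (ler_abscD _ _) _.
have small (r : R) : 0 <= r < e / 2%:R / (subdual_norm F + 1) -> r * subdual_norm F < e / 2%:R.
  case/andP=> r0 re; apply: le_lt_trans (ler_wpM2r (subdual_norm_ge0 F) (ltW re)) _.
  by rewrite mulrAC ltr_pdivrMr // ltr_pM2l; lra.
rewrite [e]splitr; apply: ltrD.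
- apply: le_lt_trans ((xs_approx n).2 F) (small _ _).
  by rewrite invr_ge0 ler0n ha // leq_maxl.
- apply: le_lt_trans (subdual_norm_bound F (S_sub (xs_S n) Sx)) _.
  by rewrite mulrC small // nA_ge0 hb // leq_maxr.
Qed.

Lemma subdual_evals_predual : predual subdual_norm subdual_evals.
Proof.
split=> [g [x [Sx ->]]|]; first by split=> //; exists (nA x); apply: subdual_eval_bound.
split.
- by exists 0; split=> //; apply/funext => F; rewrite (linear_on0 S0 (subdual_lin F)).
- move=> c _ _ [x [Sx ->]] [y [Sy ->]]; exists (c *: x + y); split; first exact: S_lin.
  by apply/funext => F; rewrite subdual_lin.
- by move=> phi _; apply: subdual_evals_closed.
- move=> F eps e0; have [x [Sx x1 Fx]] := subdual_norm_adherent F e0.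
  exists (fun G : E => G x); split=> //; first by exists x.
  move=> G; apply: le_trans (subdual_norm_bound G Sx) _.
  by rewrite mul1r ler_piMr ?subdual_norm_ge0.
- move=> L L_lin [M L_le].
  have L_pred : subdual_pred nA S (restrict (fun y => L (fun F : E => F y))).
    apply: (@restrict_subdual_pred _ M) => [c x y Sx Sy|x Sx].
      rewrite (funext (fun F : E => subdual_lin F c Sx Sy)).
      by apply: L_lin; [exists x|exists y].
    by apply: L_le; [exists x|exact: nA_ge0|exact: subdual_eval_bound].
  by exists (Subdual L_pred) => _ [x [Sx ->]]; rewrite /= restrictE.
Qed.

Lemma subdual_extend (F : E) : exists2 Psi : A -> C,
  dual_elt nA Psi & forall x, S x -> Psi x = F x.
Proof.
have [M F_le] := subdual_bounded F.
apply: (@hahn_banach R A nA nA_ge0 nAZ _ S F `|M| S_lin S0 (subdual_lin F)) => //.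
- by case: nA_norm.
- move=> x Sx; apply: le_trans (F_le x Sx) _.
  by rewrite ler_wpM2r ?ler_norm.
Qed.

End SubspaceDual.

Lemma dual_elt_bound (R : realType) (A : lmodType R[i]) (nA : A -> R) (g : A -> R[i]) :
  (forall x, 0 <= nA x) -> dual_elt nA g -> exists2 M, 0 <= M & opnorm_le nA g M.
Proof.
move=> nA_ge0 [_ [M g_le]]; exists `|M| => [|x]; first exact: normr_ge0.
by apply: le_trans (g_le x) _; rewrite ler_wpM2r ?ler_norm.
Qed.

Section SigmaWC.
Variable R : realType.
Local Notation C := (R[i]).
Variables (A : lmodType C) (nA : A -> R) (mul : A -> A -> A) (PA : set (A -> C)).
Hypothesis hD : dual_banach_algebra nA mul PA.

Let hBA : banach_algebra nA mul. Proof. by case: hD. Qed.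
Let nA_norm : is_norm nA. Proof. by case: hBA => -[]. Qed.
Let nA_ge0 x : 0 <= nA x. Proof. by case: nA_norm. Qed.
Let nAZ (c : C) x : nA (c *: x) = absc c * nA x. Proof. by case: nA_norm. Qed.
Let mulA a b c : mul a (mul b c) = mul (mul a b) c. Proof. by case: hBA. Qed.
Let mulDl (k : C) a b d : mul (k *: a + b) d = k *: mul a d + mul b d.
Proof. by case: hBA. Qed.
Let mulDr (k : C) a b d : mul d (k *: a + b) = k *: mul d a + mul d b.
Proof. by case: hBA. Qed.
Let mul_le a b : nA (mul a b) <= nA a * nA b. Proof. by case: hBA. Qed.
Let PA_predual : predual nA PA. Proof. by case: hD. Qed.
Let PA_dual f : PA f -> dual_elt nA f. Proof. by case: PA_predual => h _; apply: h. Qed.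
Let PA0 : PA (fun _ => 0). Proof. by case: PA_predual => _ []. Qed.
Let PA_lin (c : C) f g : PA f -> PA g -> PA (fun x => c * f x + g x).
Proof. by case: PA_predual => _ [_ h _ _ _]; apply: h. Qed.
Let PA_closed f : dual_elt nA f ->
  (forall eps : R, 0 < eps -> exists g, PA g /\ opnorm_le nA (fun x => f x - g x) eps) ->
  PA f.
Proof. by case: PA_predual => _ [_ _ h _ _]; apply: h. Qed.

Let PA_of_sigma_cont f : (forall (c : C) x y, f (c *: x + y) = c * f x + f y) ->
  sigma_cont PA f -> PA f.
Proof. exact: sigma_cont_linear_mem (fun f Pf => (PA_dual Pf).1) PA0 PA_lin f. Qed.

Let mul0r b : mul b 0 = 0.
Proof.
apply: (@addrI _ (mul b 0)); rewrite addr0.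
by have := mulDr 1 0 0 b; rewrite scale1r !addr0 scale1r.
Qed.

Let mul0l b : mul 0 b = 0.
Proof.
apply: (@addrI _ (mul 0 b)); rewrite addr0.
by have := mulDl 1 0 0 b; rewrite scale1r !addr0 scale1r.
Qed.

Let mulBr b x y : mul b (x - y) = mul b x - mul b y.
Proof. by rewrite addrC -scaleN1r mulDr scaleN1r addrC. Qed.

Let mulBl b x y : mul (x - y) b = mul x b - mul y b.
Proof. by rewrite addrC -scaleN1r mulDl scaleN1r addrC. Qed.

Local Notation S := (sigma_wc nA mul PA).

Lemma dual_elt_mulr g a : dual_elt nA g -> dual_elt nA (fun y => g (mul y a)).
Proof.
move=> g_dual; have [[g_lin _] [M M0 g_le]] := (g_dual, dual_elt_bound nA_ge0 g_dual).
split=> [c x y|]; first by rewrite mulDl g_lin.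
exists (M * nA a) => x; apply: le_trans (g_le _) _.
by rewrite -mulrA [nA a * _]mulrC ler_wpM2l.
Qed.

Lemma dual_elt_mull g a : dual_elt nA g -> dual_elt nA (fun y => g (mul a y)).
Proof.
move=> g_dual; have [[g_lin _] [M M0 g_le]] := (g_dual, dual_elt_bound nA_ge0 g_dual).
split=> [c x y|]; first by rewrite mulDr g_lin.
by exists (M * nA a) => x; apply: le_trans (g_le _) _; rewrite -mulrA ler_wpM2l.
Qed.

Lemma predual_mull h a : PA h -> PA (fun b => h (mul a b)).
Proof.
move=> Ph; apply: PA_of_sigma_cont => [c x y|]; first by rewrite mulDr (PA_dual Ph).1.
by have [_ _ /(_ a)/wcontP la _] := hD; apply: la.
Qed.

Lemma predual_mulr h a : PA h -> PA (fun b => h (mul b a)).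
Proof.
move=> Ph; apply: PA_of_sigma_cont => [c x y|]; first by rewrite mulDl (PA_dual Ph).1.
by have [_ _ _ /(_ a)/wcontP ra] := hD; apply: ra.
Qed.

Lemma sigma_wcP x : S x <-> forall g, dual_elt nA g ->
  PA (fun b => g (mul b x)) /\ PA (fun b => g (mul x b)).
Proof.
split=> [[/wcontP x_r /wcontP x_l] g g_dual|x_PA].
  have [g_lin _] := g_dual.
  split; apply: PA_of_sigma_cont; try by [apply: x_r|apply: x_l].
  - by move=> c y z; rewrite mulDl g_lin.
  - by move=> c y z; rewrite mulDr g_lin.
by split; apply/wcontP => g g_dual; apply: sigma_cont_mem; case: (x_PA g g_dual).
Qed.

Lemma sigma_wc_lin (c : C) x y : S x -> S y -> S (c *: x + y).
Proof.
move=> /sigma_wcP Sx /sigma_wcP Sy; apply/sigma_wcP => g g_dual.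
have [g_lin _] := g_dual; have [Sx1 Sx2] := Sx g g_dual; have [Sy1 Sy2] := Sy g g_dual.
split.
- have -> : (fun b => g (mul b (c *: x + y))) = (fun b => c * g (mul b x) + g (mul b y)).
    by apply/funext => b; rewrite mulDr g_lin.
  exact: PA_lin.
- have -> : (fun b => g (mul (c *: x + y) b)) = (fun b => c * g (mul x b) + g (mul y b)).
    by apply/funext => b; rewrite mulDl g_lin.
  exact: PA_lin.
Qed.

Lemma sigma_wc0 : S 0.
Proof.
apply/sigma_wcP => g g_dual.
rewrite (funext (fun b => congr1 g (mul0r b))) (funext (fun b => congr1 g (mul0l b))).
by rewrite (scalar_linear0 g_dual.1).
Qed.

Lemma sigma_wc_mulr x a : S x -> S (mul x a).
Proof.
move=> /sigma_wcP Sx; apply/sigma_wcP => g g_dual; split.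
  rewrite (funext (fun b => congr1 g (mulA b x a))).
  by case: (Sx _ (dual_elt_mulr a g_dual)).
rewrite (funext (fun b => congr1 g (esym (mulA x a b)))).
by apply: (predual_mull (h := fun y => g (mul x y))); case: (Sx _ g_dual).
Qed.

Lemma sigma_wc_mull x a : S x -> S (mul a x).
Proof.
move=> /sigma_wcP Sx; apply/sigma_wcP => g g_dual; split.
  rewrite (funext (fun b => congr1 g (mulA b a x))).
  by apply: (predual_mulr (h := fun y => g (mul y x))); case: (Sx _ g_dual).
rewrite (funext (fun b => congr1 g (esym (mulA a x b)))).
by case: (Sx _ (dual_elt_mull a g_dual)).
Qed.

Lemma sigma_wc_closed (u : nat -> A) x : (forall n, S (u n)) ->
  (forall eps, 0 < eps -> exists N, forall n, (N <= n)%N -> nA (u n - x) < eps) ->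
  S x.
Proof.
move=> Su u_x; apply/sigma_wcP => g g_dual.
have [[g_lin _] [M M0 g_le]] := (g_dual, dual_elt_bound nA_ge0 g_dual).
have approx eps : 0 < eps -> exists n, M * nA (x - u n) <= eps.
  move=> e0; have M1 : 0 < M + 1 by lra.
  have [N hN] := u_x _ (divr_gt0 e0 M1); exists N.
  rewrite -opprB -scaleN1r nAZ abscN absc1 mul1r.
  apply: le_trans (ler_wpM2l M0 (ltW (hN N (leqnn _)))) _.
  by rewrite mulrA ler_pdivrMr // mulrDr mulr1 [eps * M]mulrC lerDl ltW.
split; apply: PA_closed; [exact: dual_elt_mulr| |exact: dual_elt_mull|].
- move=> eps e0; have [n hn] := approx eps e0; exists (fun b => g (mul b (u n))).
  split; first by have /sigma_wcP/(_ g g_dual)[] := Su n.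
  move=> b; rewrite -(scalar_linearB g_lin) -mulBr.
  apply: le_trans (g_le _) (le_trans (ler_wpM2l M0 (mul_le _ _)) _).
  by rewrite mulrCA [eps * _]mulrC ler_wpM2l.
- move=> eps e0; have [n hn] := approx eps e0; exists (fun b => g (mul (u n) b)).
  split; first by have /sigma_wcP/(_ g g_dual)[] := Su n.
  move=> b; rewrite -(scalar_linearB g_lin) -mulBl.
  apply: le_trans (g_le _) (le_trans (ler_wpM2l M0 (mul_le _ _)) _).
  by rewrite mulrA ler_wpM2r.
Qed.

Let nA_complete : complete_norm nA. Proof. by case: hBA => -[]. Qed.
Let nA_norming x (eps : R) : 0 < eps ->
  exists f, [/\ dual_elt nA f, opnorm_le nA f 1 & nA x - eps < absc (f x)].
Proof.
move=> e0; case: PA_predual => _ [_ _ _ /(_ x eps e0) [f [Pf f1 fx]] _].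
by exists f; split=> //; apply: PA_dual.
Qed.

Local Notation E := (subdual nA S).
Local Notation nE := (@subdual_norm _ _ nA S).

Let nE_ge0 (F : E) : 0 <= nE F := subdual_norm_ge0 nA_norm sigma_wc0 F.
Let nE_bound (F : E) x (Sx : S x) : absc (F x) <= nE F * nA x :=
  subdual_norm_bound nA_norm sigma_wc_lin sigma_wc0 F Sx.

Lemma swc_lact_pred (a : A) (F : E) : subdual_pred nA S (restrict S (fun x => F (mul x a))).
Proof.
apply: (restrict_subdual_pred sigma_wc_lin (M := nE F * nA a)).
  by move=> c x y Sx Sy; rewrite mulDl subdual_lin //; exact: sigma_wc_mulr.
move=> x Sx; apply: le_trans (nE_bound F (sigma_wc_mulr a Sx)) _.
by rewrite -mulrA ler_wpM2l // mulrC.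
Qed.

Lemma swc_ract_pred (a : A) (F : E) : subdual_pred nA S (restrict S (fun x => F (mul a x))).
Proof.
apply: (restrict_subdual_pred sigma_wc_lin (M := nE F * nA a)).
  by move=> c x y Sx Sy; rewrite mulDr subdual_lin //; exact: sigma_wc_mull.
move=> x Sx; apply: le_trans (nE_bound F (sigma_wc_mull a Sx)) _.
by rewrite -mulrA ler_wpM2l.
Qed.

Definition swc_lact (a : A) (F : E) : E := Subdual (swc_lact_pred a F).
Definition swc_ract (F : E) (a : A) : E := Subdual (swc_ract_pred a F).

Lemma swc_lactE a F x : S x -> swc_lact a F x = F (mul x a).
Proof. exact: restrictE. Qed.

Lemma swc_ractE a F x : S x -> swc_ract F a x = F (mul a x).
Proof. exact: restrictE. Qed.

Lemma swc_bimodule : banach_bimodule nA mul nE swc_lact swc_ract.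
Proof.
split; split.
- split; first exact: subdual_is_norm sigma_wc_lin sigma_wc0.
  exact: subdual_complete nA_norm sigma_wc_lin sigma_wc0.
- move=> k a b F; apply: subdual_eq => x Sx.
  by rewrite subdual_addE subdual_scaleE !swc_lactE // mulDr subdual_lin //;
    exact: sigma_wc_mulr.
- move=> k a F G; apply: subdual_eq => x Sx.
  by rewrite subdual_addE subdual_scaleE !swc_lactE.
- move=> k a b F; apply: subdual_eq => x Sx.
  by rewrite subdual_addE subdual_scaleE !swc_ractE // mulDl subdual_lin //;
    exact: sigma_wc_mull.
- move=> k a F G; apply: subdual_eq => x Sx.
  by rewrite subdual_addE subdual_scaleE !swc_ractE.
- move=> a b F; apply: subdual_eq => x Sx.
  by rewrite !swc_lactE ?mulA //; exact: sigma_wc_mulr.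
- move=> a b F; apply: subdual_eq => x Sx.
  by rewrite !swc_ractE ?mulA //; exact: sigma_wc_mull.
- move=> a b F; apply: subdual_eq => x Sx.
  have Sbx := sigma_wc_mull b Sx; have Sxa := sigma_wc_mulr a Sx.
  by rewrite swc_ractE // !swc_lactE // swc_ractE // mulA.
- exists 1 => a F; rewrite mul1r.
  have B0 := mulr_ge0 (nA_ge0 a) (nE_ge0 F).
  split; apply: (subdual_norm_le nA_norm sigma_wc0 B0) => x Sx.
  + rewrite swc_lactE //; apply: le_trans (nE_bound F (sigma_wc_mulr a Sx)) _.
    by rewrite [nA a * _]mulrC -mulrA ler_wpM2l // mulrC.
  + rewrite swc_ractE //; apply: le_trans (nE_bound F (sigma_wc_mull a Sx)) _.
    by rewrite [nA a * _]mulrC -mulrA ler_wpM2l.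
Qed.

Lemma swc_normal :
  normal_dual_bimodule nA mul PA nE swc_lact swc_ract (@subdual_evals _ _ nA S).
Proof.
split.
- exact: swc_bimodule.
- exact: subdual_evals_predual nA_norm nA_complete sigma_wc_lin sigma_wc0
    sigma_wc_closed nA_norming.
- move=> _ a [y [Sy ->]]; split.
    by exists (mul a y); split; [exact: sigma_wc_mull|apply/funext => F; rewrite swc_ractE].
  by exists (mul y a); split; [exact: sigma_wc_mulr|apply/funext => F; rewrite swc_lactE].
- move=> F; have [Psi Psi_dual Psi_F] := subdual_extend nA_norm sigma_wc_lin sigma_wc0 F.
  split; apply/wcontP => _ [y [Sy ->]].
  + have [/wcontP _ /wcontP y_l] := Sy.
    move=> a0 eps e0; have [n [fs [delta [d0 Pfs near]]]] := y_l Psi Psi_dual a0 eps e0.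
    exists n, fs, delta; split=> // b /near.
    by rewrite !swc_lactE // !Psi_F //; exact: sigma_wc_mulr.
  + have [/wcontP y_r /wcontP _] := Sy.
    move=> a0 eps e0; have [n [fs [delta [d0 Pfs near]]]] := y_r Psi Psi_dual a0 eps e0.
    exists n, fs, delta; split=> // b /near.
    by rewrite !swc_ractE // !Psi_F //; exact: sigma_wc_mull.
Qed.

Section Lift.
Variable D : A -> A -> C.
Hypothesis D_der : derivation_to_dual nA mul D.

Lemma swc_lift_pred a : subdual_pred nA S (restrict S (D a)).
Proof.
have [D_dual _ [M D_le] _] := D_der.
apply: (restrict_subdual_pred sigma_wc_lin (M := M * nA a)) => [c x y _ _|x _].
  exact: (D_dual a).1.
exact: D_le.
Qed.

Definition swc_lift (a : A) : E := Subdual (swc_lift_pred a).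

Lemma swc_liftE a x : S x -> swc_lift a x = D a x.
Proof. exact: restrictE. Qed.

Lemma swc_lift_derivation : derivation nA mul nE swc_lact swc_ract swc_lift.
Proof.
have [_ D_lin [M D_le] D_mul] := D_der.
split.
- move=> k a b; apply: subdual_eq => x Sx.
  by rewrite subdual_addE subdual_scaleE !swc_liftE // D_lin.
- exists `|M| => a; have B0 := mulr_ge0 (normr_ge0 M) (nA_ge0 a).
  apply: (subdual_norm_le nA_norm sigma_wc0 B0) => x Sx.
  rewrite swc_liftE //; apply: le_trans (D_le a x) _.
  by rewrite ler_wpM2r ?ler_wpM2r ?ler_norm.
- move=> a b; apply: subdual_eq => x Sx.
  have Sbx := sigma_wc_mull b Sx; have Sxa := sigma_wc_mulr a Sx.
  by rewrite subdual_addE swc_ractE // swc_lactE // !swc_liftE // D_mul.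
Qed.

Lemma swc_lift_wcont : wcont PA (swc_eval nA mul PA) D ->
  wcont PA (@subdual_evals _ _ nA S) swc_lift.
Proof.
move=> D_cont a0 _ eps [y [Sy ->]] e0.
have [n [fs [delta [d0 Pfs near]]]] := D_cont a0 _ eps (ex_intro _ y (conj Sy erefl)) e0.
by exists n, fs, delta; split=> // b /near; rewrite !swc_liftE.
Qed.

End Lift.

End SigmaWC.

Theorem proposition3p8 (R : realType) (A : lmodType (R[i])) (nA : A -> R)
  (mul : A -> A -> A) (PA : set (A -> R[i])) :
  dual_banach_algebra nA mul PA ->
  wapprox_connes_amenable nA mul PA ->
  wapprox_weakly_connes_amenable nA mul PA.
Proof.
move=> hD hCA D D_der D_cont.
have [I [le [F [le_dir F_lim]]]] := hCA _ _ _ _ _ (swc_normal hD) _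
  (swc_lift_derivation hD D_der) (swc_lift_wcont hD D_der D_cont).
exists I, le, (fun i => subdual_fun (F i)); split=> // [i|a _ eps [y [Sy ->]] e0].
  by split; [exact: subdual_lin|exact: subdual_bounded].
have [i0 near] := F_lim a (fun G => G y) eps (ex_intro _ y (conj Sy erefl)) e0.
exists i0 => i /near.
by rewrite subdual_subE swc_lactE // swc_ractE // swc_liftE.
Qed.
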